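(* Under the standing assumptions, writing (R1) for $\mathscr{R}(A^*AB)=\mathscr{R}(B)$ and (R2) for $\mathscr{R}(CC^*B^* )=\mathscr{R}(B^* )$, the following hold. (57) $M^\dagger\in\{C^{-1}B^{(1)}A^{-1}\}$. (58) $M^\dagger\in\{C^{-1}B^{(1,2)}A^{-1}\}$. (59) $M^\dagger\in\{C^{-1}B^{(1,3)}A^{-1}\}\Leftrightarrow$ (R1). (60) $M^\dagger\in\{C^{-1}B^{(1,4)}A^{-1}\}\Leftrightarrow$ (R2). (61) $M^\dagger\in\{C^{-1}B^{(1,2,3)}A^{-1}\}\Leftrightarrow$ (R1). (62) $M^\dagger\in\{C^{-1}B^{(1,2,4)}A^{-1}\}\Leftrightarrow$ (R2). (63) $M^\dagger\in\{C^{-1}B^{(1,3,4)}A^{-1}\}\Leftrightarrow$ (R1) and (R2). (64) The following are equivalent: (i) $M^\dagger=C^{-1}B^\dagger A^{-1}$; (ii) (R1) and (R2); (iii) $\mathscr{R}(AA^*M)=\mathscr{R}(M)$ and $\mathscr{R}(C^*CM^* )=\mathscr{R}(M^* )$; (iv) $(A^*AB)(A^*AB)^\dagger=BB^\dagger$ and $(BCC^* )^\dagger(BCC^* )=B^\dagger B$; (v) $A^*ABB^*$ and $B^*BCC^*$ are both EP; (vi) $AA^*MM^*$ and $M^*MC^*C$ are both EP.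
   Context: Standing assumptions: $m,n\ge1$; $A\in\mathbb{C}^{m\times m}$ and $C\in\mathbb{C}^{n\times n}$ are nonsingular; $B\in\mathbb{C}^{m\times n}$; $M=ABC$. For a complex matrix $X$, $X^*$ is its conjugate transpose, $r(X)$ its rank and $\mathscr{R}(X)$ its column space. A square matrix $X$ is called EP (range Hermitian) if $\mathscr{R}(X^* )=\mathscr{R}(X)$. For $X\in\mathbb{C}^{p\times q}$, a matrix $G\in\mathbb{C}^{q\times p}$ is called an $\{i,\ldots,j\}$-generalized inverse of $X$ (written $X^{(i,\ldots,j)}$) if it satisfies the equations numbered $i,\ldots,j$ among the four Penrose equations (i) $XGX=X$, (ii) $GXG=G$, (iii) $(XG)^*=XG$, (iv) $(GX)^*=GX$; $\{X^{(i,\ldots,j)}\}$ denotes the set of all such $G$. The Moore–Penrose inverse $X^\dagger$ is the unique matrix satisfying all four equations. For a type $(k,\ldots,l)$, $\{C^{-1}B^{(k,\ldots,l)}A^{-1}\}:=\{C^{-1}GA^{-1}: G\in\{B^{(k,\ldots,l)}\}\}$. *)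

(* Complex matrices are modelled over an arbitrary
   numClosedFieldType R (e.g. algC), which carries complex conjugation. *)
From HB Require Import structures.
From mathcomp Require Import all_boot all_order all_algebra.
From Stdlib Require Import ClassicalEpsilon.
Set Implicit Arguments. Unset Strict Implicit. Unset Printing Implicit Defensive.
Import Order.TTheory GRing.Theory Num.Theory.
Local Open Scope ring_scope.

Definition ctr (R : numClosedFieldType) (p q : nat) (X : 'M[R]_(p, q)) : 'M[R]_(q, p) :=
  (map_mx (fun x => x^*) X)^T.

(* column space equality R(X) = R(Y): column space of X = row space of X^T *)
Definition colspace_eq (R : numClosedFieldType) (p q r : nat)
  (X : 'M[R]_(p, q)) (Y : 'M[R]_(p, r)) : Prop := (X^T == Y^T)%MS.

Definition EP (R : numClosedFieldType) (p : nat) (X : 'M[R]_p) : Prop :=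
  colspace_eq (ctr X) X.

Definition penrose (R : numClosedFieldType) (p q : nat) (i : nat)
  (X : 'M[R]_(p, q)) (G : 'M[R]_(q, p)) : Prop :=
  match i with
  | 1%N => X *m G *m X = X
  | 2%N => G *m X *m G = G
  | 3%N => ctr (X *m G) = X *m G
  | 4%N => ctr (G *m X) = G *m X
  | _ => True
  end.

Definition is_ginv (R : numClosedFieldType) (p q : nat) (s : seq nat)
  (X : 'M[R]_(p, q)) (G : 'M[R]_(q, p)) : Prop :=
  forall i, i \in s -> penrose i X G.

Definition mp_inv (R : numClosedFieldType) (p q : nat) (X : 'M[R]_(p, q)) : 'M[R]_(q, p) :=
  epsilon (inhabits 0) (fun G => is_ginv [:: 1; 2; 3; 4]%N X G).

Definition in_CBA (R : numClosedFieldType) (m n : nat) (s : seq nat)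
  (A : 'M[R]_m) (B : 'M[R]_(m, n)) (C : 'M[R]_n) (Y : 'M[R]_(n, m)) : Prop :=
  exists G : 'M[R]_(n, m), is_ginv s B G /\ Y = invmx C *m G *m invmx A.

From HB Require Import structures.
From mathcomp Require Import all_boot all_order all_algebra zify.
From Stdlib Require Import ClassicalEpsilon.
Import Order.TTheory GRing.Theory Num.Theory.
Local Open Scope ring_scope.
Set Implicit Arguments. Unset Strict Implicit. Unset Printing Implicit Defensive.

(* Put G := C M^+ A, so that M^+ = C^-1 G A^-1.  Since M = A B C, the equations
   B G B = B and G B G = G come for free, while B G = A^-1 (M M^+) A.  As M M^+ is
   the orthogonal projector onto R(M), B G is Hermitian iff M M^+ commutes with
   A A^*, i.e. iff R(M) is A A^*-invariant, which after cancelling A and C is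
   R(A^* A B) = R(B).  The same argument for M^* = C^* B^* A^*, whose
   Moore-Penrose inverse is (M^+)^*, shows that G B is Hermitian iff
   R(C C^* B^* ) = R(B^* ).  So G satisfies Penrose equations 3 and 4 exactly under
   (R1) and (R2), and M^+ = C^-1 B^+ A^-1 iff G = B^+ iff (R1) and (R2).  The other
   conditions of (64) restate (R1) and (R2) through X X^+ = Y Y^+ <-> R(X) = R(Y)
   and, for invertible W, W Y Y^* is EP <-> R(W Y) = R(Y). *)

Lemma mulmx_unit2_eq (R : comUnitRingType) p q (W : 'M[R]_p) (V : 'M[R]_q)
    (X Y : 'M[R]_(p, q)) :
  W \in unitmx -> V \in unitmx -> W *m X *m V = W *m Y *m V <-> X = Y.
Proof.
move=> Wu Vu; split=> [|-> //].
move=> /(congr1 (mulmx (invmx W))); rewrite -!mulmxA !mulKmx //.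
by move=> /(congr1 (mulmx^~ (invmx V))); rewrite !mulmxK.
Qed.

Section ConjugateTranspose.
Variable R : numClosedFieldType.

Lemma ctrK p q (X : 'M[R]_(p, q)) : ctr (ctr X) = X.
Proof. by apply/matrixP=> i j; rewrite !mxE conjCK. Qed.

Lemma ctrM p q r (X : 'M[R]_(p, q)) (Y : 'M[R]_(q, r)) :
  ctr (X *m Y) = ctr Y *m ctr X.
Proof. by rewrite /ctr map_mxM trmx_mul. Qed.

Lemma ctr_unitmx p (W : 'M[R]_p) : (ctr W \in unitmx) = (W \in unitmx).
Proof. by rewrite /ctr unitmx_tr map_unitmx. Qed.

Lemma ctr_invmx p (W : 'M[R]_p) : ctr (invmx W) = invmx (ctr W).
Proof. by rewrite /ctr map_invmx trmx_inv. Qed.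

Lemma unitmx_mulctr p (W : 'M[R]_p) : (W *m ctr W \in unitmx) = (W \in unitmx).
Proof. by rewrite unitmx_mul ctr_unitmx andbb. Qed.

Lemma unitmx_ctrmul p (W : 'M[R]_p) : (ctr W *m W \in unitmx) = (W \in unitmx).
Proof. by rewrite unitmx_mul ctr_unitmx andbb. Qed.

Lemma mxrank_ctr p q (X : 'M[R]_(p, q)) : \rank (ctr X) = \rank X.
Proof. by rewrite /ctr mxrank_tr mxrank_map. Qed.

Lemma mulmx_ctr_eq0 p q (X : 'M[R]_(p, q)) : X *m ctr X = 0 -> X = 0.
Proof.
move=> /matrixP XX0; apply/matrixP=> i j; rewrite mxE.
have := XX0 i i; rewrite !mxE => /eqP; rewrite psumr_eq0 => [/allP/(_ j)|k _].
  by rewrite mem_index_enum !mxE mul_conjC_eq0 => /(_ isT)/eqP.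
by rewrite !mxE mul_conjC_ge0.
Qed.

Lemma mxrank_gram p q (X : 'M[R]_(p, q)) : \rank (X *m ctr X) = \rank X.
Proof.
have ker_eq : (kermx (X *m ctr X) == kermx X)%MS.
  apply/andP; split; apply/sub_kermxP; last by rewrite mulmxA mulmx_ker mul0mx.
  apply: mulmx_ctr_eq0.
  by rewrite ctrM mulmxA -(mulmxA _ X) mulmx_ker mul0mx.
have := mxrank_ker (X *m ctr X); rewrite (eqmxP ker_eq) mxrank_ker.
have := rank_leq_row X; have := rank_leq_row (X *m ctr X); lia.
Qed.

Lemma hermitian_unit_conjP p (W P : 'M[R]_p) :
  W \in unitmx -> ctr P = P ->
  ctr (invmx W *m P *m W) = invmx W *m P *m W <->
  W *m ctr W *m P = P *m (W *m ctr W).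
Proof.
move=> Wu P_herm; have W'u : ctr W \in unitmx by rewrite ctr_unitmx.
rewrite !ctrM P_herm ctr_invmx -(mulmx_unit2_eq _ _ Wu W'u) !mulmxA.
by rewrite mulmxKV // mulmxV // mul1mx.
Qed.

End ConjugateTranspose.

Section ColumnSpace.
Variable R : numClosedFieldType.

Lemma colspace_eq_sym p q r (X : 'M[R]_(p, q)) (Y : 'M[R]_(p, r)) :
  colspace_eq X Y -> colspace_eq Y X.
Proof. by move=> /eqmxP XY; apply/eqmxP; apply: eqmx_sym. Qed.

Lemma colspace_eq_trans p q r s (X : 'M[R]_(p, q)) (Y : 'M[R]_(p, r))
    (Z : 'M[R]_(p, s)) :
  colspace_eq X Y -> colspace_eq Y Z -> colspace_eq X Z.
Proof. by move=> /eqmxP XY /eqmxP YZ; apply/eqmxP; apply: eqmx_trans XY YZ. Qed.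

Lemma colspace_subP p q r (X : 'M[R]_(p, q)) (Y : 'M[R]_(p, r)) :
  reflect (exists U, X = Y *m U) (X^T <= Y^T)%MS.
Proof.
apply: (iffP submxP) => [[D XD] | [U ->]]; last by exists U^T; rewrite trmx_mul.
by exists D^T; rewrite -[X]trmxK XD trmx_mul trmxK.
Qed.

Lemma colspace_eqP p q r (X : 'M[R]_(p, q)) (Y : 'M[R]_(p, r)) :
  colspace_eq X Y <-> (exists U, X = Y *m U) /\ (exists V, Y = X *m V).
Proof.
by split=> [/andP[] | []] /colspace_subP XY /colspace_subP YX //; apply/andP.
Qed.

Lemma colspace_eq_rankP p q r (X : 'M[R]_(p, q)) (Y : 'M[R]_(p, r)) :
  \rank X = \rank Y -> colspace_eq X Y <-> exists U, X = Y *m U.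
Proof.
move=> rXY; split=> [/colspace_eqP[] // | /colspace_subP sXY].
by rewrite /colspace_eq; have [_ <-] := mxrank_leqif_eq sXY; rewrite !mxrank_tr rXY.
Qed.

Lemma colspace_eq_mulr p q (X : 'M[R]_(p, q)) (V : 'M[R]_q) :
  V \in unitmx -> colspace_eq (X *m V) X.
Proof.
move=> Vu; apply/eqmxP; rewrite trmx_mul.
by apply: eqmxMfull; rewrite row_full_unit unitmx_tr.
Qed.

Lemma colspace_eq_mull2 p q r (W : 'M[R]_p) (X : 'M[R]_(p, q)) (Y : 'M[R]_(p, r)) :
  W \in unitmx -> colspace_eq (W *m X) (W *m Y) <-> colspace_eq X Y.
Proof.
move=> Wu; have Wfree : row_free W^T by rewrite row_free_unit unitmx_tr.
by rewrite /colspace_eq !trmx_mul !submxMfree.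
Qed.

Lemma colspace_eq_congr p q q' r r' (X : 'M[R]_(p, q)) (X' : 'M[R]_(p, q'))
    (Y : 'M[R]_(p, r)) (Y' : 'M[R]_(p, r')) :
  colspace_eq X X' -> colspace_eq Y Y' -> colspace_eq X Y <-> colspace_eq X' Y'.
Proof. by move=> /eqmxP XX' /eqmxP YY'; rewrite /colspace_eq !XX' !YY'. Qed.

Lemma colspace_eq_unit2 p q (W : 'M[R]_p) (X Y : 'M[R]_(p, q)) (V : 'M[R]_q) :
  W \in unitmx -> V \in unitmx ->
  colspace_eq (W *m X *m V) (W *m Y *m V) <-> colspace_eq X Y.
Proof.
move=> Wu Vu; rewrite -(colspace_eq_mull2 X Y Wu).
exact: colspace_eq_congr (colspace_eq_mulr _ Vu) (colspace_eq_mulr _ Vu).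
Qed.

Lemma colspace_eq_gram p q (X : 'M[R]_(p, q)) : colspace_eq (X *m ctr X) X.
Proof. by apply/colspace_eq_rankP; [exact: mxrank_gram | exists (ctr X)]. Qed.

End ColumnSpace.

Section MoorePenrose.
Variable R : numClosedFieldType.

Lemma is_ginvE s p q (X : 'M[R]_(p, q)) G :
  penrose 1 X G -> penrose 2 X G ->
  is_ginv s X G <-> (3 \in s -> penrose 3 X G) /\ (4 \in s -> penrose 4 X G).
Proof.
move=> h1 h2; split=> [gen | [h3 h4] [|[|[|[|[|i]]]]]] //; by split=> /gen.
Qed.

Lemma is_ginv_penroseP p q (X : 'M[R]_(p, q)) G :
  is_ginv [:: 1; 2; 3; 4]%N X G <->
  [/\ X *m G *m X = X, G *m X *m G = G,
      ctr (X *m G) = X *m G & ctr (G *m X) = G *m X].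
Proof.
split=> [gen | [h1 h2 h3 h4] i]; last by rewrite !inE => /or4P[] /eqP->.
by split; [apply: (gen 1%N) | apply: (gen 2%N) | apply: (gen 3%N) | apply: (gen 4%N)].
Qed.

Lemma full_rank_factor_mp_inv p q k (F : 'M[R]_(p, k)) (K : 'M[R]_(k, q)) :
  row_full F -> row_free K ->
  is_ginv [:: 1; 2; 3; 4]%N (F *m K)
    (ctr K *m invmx (K *m ctr K) *m invmx (ctr F *m F) *m ctr F).
Proof.
move=> Ffull Kfree; set S := K *m ctr K; set T := ctr F *m F.
have Su : S \in unitmx by rewrite -row_free_unit /row_free mxrank_gram.
have Tu : T \in unitmx.
  by rewrite -row_free_unit /row_free /T -{2}[F]ctrK mxrank_gram mxrank_ctr.
have S_herm : ctr S = S by rewrite /S ctrM ctrK.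
have T_herm : ctr T = T by rewrite /T ctrM ctrK.
set Y := ctr K *m _ *m _ *m _.
have XY : F *m K *m Y = F *m invmx T *m ctr F.
  by rewrite /Y !mulmxA -(mulmxA F K) -/S mulmxK.
have YX : Y *m (F *m K) = ctr K *m invmx S *m K.
  by rewrite /Y !mulmxA -(mulmxA _ (ctr F) F) -/T mulmxKV.
apply/is_ginv_penroseP; split.
- by rewrite XY -!mulmxA (mulmxA (ctr F)) -/T mulKmx.
- by rewrite YX /Y -!mulmxA (mulmxA K) -/S mulKmx.
- by rewrite XY !ctrM ctrK ctr_invmx T_herm !mulmxA.
- by rewrite YX !ctrM ctrK ctr_invmx S_herm !mulmxA.
Qed.

Lemma mp_inv_exists p q (X : 'M[R]_(p, q)) :
  exists G, is_ginv [:: 1; 2; 3; 4]%N X G.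
Proof.
rewrite -(mulmx_base X); eexists.
exact: full_rank_factor_mp_inv (col_base_full X) (row_base_free X).
Qed.

Section Equations.
Variables (p q : nat) (X : 'M[R]_(p, q)).

Lemma mp_invP : is_ginv [:: 1; 2; 3; 4]%N X (mp_inv X).
Proof. exact: epsilon_spec (mp_inv_exists X). Qed.

Lemma mp_inv1 : X *m mp_inv X *m X = X.
Proof. by case/is_ginv_penroseP: mp_invP. Qed.

Lemma mp_inv2 : mp_inv X *m X *m mp_inv X = mp_inv X.
Proof. by case/is_ginv_penroseP: mp_invP. Qed.

Lemma mp_inv3 : ctr (X *m mp_inv X) = X *m mp_inv X.
Proof. by case/is_ginv_penroseP: mp_invP. Qed.

Lemma mp_inv4 : ctr (mp_inv X *m X) = mp_inv X *m X.
Proof. by case/is_ginv_penroseP: mp_invP. Qed.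

End Equations.

Lemma mp_inv_uniq p q (X : 'M[R]_(p, q)) G :
  is_ginv [:: 1; 2; 3; 4]%N X G -> G = mp_inv X.
Proof.
move=> /is_ginv_penroseP[g1 g2 g3 g4].
have GXY : G = G *m X *m mp_inv X.
  rewrite -{1}g2 -mulmxA -g3 ctrM -{1}[X]mp_inv1 ctrM mp_inv3 -!mulmxA.
  by rewrite (mulmxA (ctr G)) -ctrM g3 !mulmxA g2.
have YXG : mp_inv X = G *m X *m mp_inv X.
  rewrite -{1}mp_inv2 -mp_inv4 ctrM -{1}[X]g1 -(mulmxA X G X) ctrM g4 -!mulmxA.
  by rewrite (mulmxA (ctr X)) -ctrM mp_inv4 mp_inv2 mulmxA.
by rewrite GXY -YXG.
Qed.

Lemma mp_inv_ctr p q (X : 'M[R]_(p, q)) : mp_inv (ctr X) = ctr (mp_inv X).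
Proof.
apply/esym/mp_inv_uniq/is_ginv_penroseP; split; rewrite -?ctrM ?ctrK.
- by rewrite mulmxA mp_inv1.
- by rewrite mulmxA mp_inv2.
- by rewrite mp_inv4.
- by rewrite mp_inv3.
Qed.

Lemma mp_inv_proj_id p q r (X : 'M[R]_(p, q)) (Y : 'M[R]_(p, r)) U :
  Y = X *m U -> X *m mp_inv X *m Y = Y.
Proof. by move=> ->; rewrite mulmxA mp_inv1. Qed.

Lemma mulmx_mp_inv_eq p q r (X : 'M[R]_(p, q)) (Y : 'M[R]_(p, r)) :
  X *m mp_inv X = Y *m mp_inv Y <-> colspace_eq X Y.
Proof.
rewrite colspace_eqP; split=> [PXY | [[U XU] [V YV]]].
  split; [exists (mp_inv Y *m X) | exists (mp_inv X *m Y)].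
    by rewrite mulmxA -PXY mp_inv1.
  by rewrite mulmxA PXY mp_inv1.
have YX : Y *m mp_inv Y *m (X *m mp_inv X) = X *m mp_inv X.
  by rewrite mulmxA (mp_inv_proj_id XU).
have XY : X *m mp_inv X *m (Y *m mp_inv Y) = Y *m mp_inv Y.
  by rewrite mulmxA (mp_inv_proj_id YV).
by rewrite -[LHS]mp_inv3 -YX ctrM !mp_inv3 XY.
Qed.

Lemma mp_inv_mulmx_eq p q r (X : 'M[R]_(p, q)) (Y : 'M[R]_(r, q)) :
  mp_inv X *m X = mp_inv Y *m Y <-> colspace_eq (ctr X) (ctr Y).
Proof.
rewrite -[mp_inv X *m X]mp_inv4 -[mp_inv Y *m Y]mp_inv4 !ctrM -!mp_inv_ctr.
exact: mulmx_mp_inv_eq.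
Qed.

Lemma hermitian_commute_proj p q (H : 'M[R]_p) (X : 'M[R]_(p, q)) :
  ctr H = H ->
  H *m (X *m mp_inv X) = X *m mp_inv X *m H <-> exists U, H *m X = X *m U.
Proof.
move=> H_herm; split=> [comm | [U HX]].
  exists (mp_inv X *m H *m X).
  have -> : H *m X = H *m (X *m mp_inv X) *m X by rewrite -mulmxA mp_inv1.
  by rewrite comm -!mulmxA.
have PHX : X *m mp_inv X *m (H *m X) = H *m X by rewrite HX mulmxA mp_inv1.
have := mp_inv3 X; set P := X *m mp_inv X in PHX * => P_herm.
have PHP : P *m H *m P = H *m P by rewrite /P !mulmxA -(mulmxA _ H X) PHX.
clearbody P.
have := congr1 (@ctr _ _ _) PHP; rewrite !ctrM H_herm P_herm mulmxA => PHP_PH.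
by rewrite -PHP_PH PHP.
Qed.

End MoorePenrose.

Section EP.
Variable R : numClosedFieldType.

Lemma EP_ctr p (X : 'M[R]_p) : EP (ctr X) <-> EP X.
Proof. by rewrite /EP ctrK; split=> /colspace_eq_sym. Qed.

Lemma EP_mul_gram p q (W : 'M[R]_p) (Y : 'M[R]_(p, q)) : W \in unitmx ->
  EP (W *m Y *m ctr Y) <-> colspace_eq (W *m Y) Y.
Proof.
move=> Wu; have W'u : ctr W \in unitmx by rewrite ctr_unitmx.
have ctr_Y : colspace_eq (ctr (W *m Y *m ctr Y)) Y.
  rewrite !ctrM ctrK mulmxA.
  exact: colspace_eq_trans (colspace_eq_mulr _ W'u) (colspace_eq_gram Y).
have WY : colspace_eq (W *m Y *m ctr Y) (W *m Y).
  by rewrite -mulmxA colspace_eq_mull2 //; exact: colspace_eq_gram.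
by rewrite /EP (colspace_eq_congr ctr_Y WY); split=> /colspace_eq_sym.
Qed.

End EP.

Lemma in_CBA_iff (R : numClosedFieldType) m n s (A : 'M[R]_m) (B : 'M[R]_(m, n))
    (C : 'M[R]_n) (Y : 'M[R]_(n, m)) :
  A \in unitmx -> C \in unitmx ->
  in_CBA s A B C Y <-> is_ginv s B (C *m Y *m A).
Proof.
move=> Au Cu; split=> [[G [BG ->]] | BG].
  by rewrite -!mulmxA mulKVmx // mulmxA mulmxKV.
by exists (C *m Y *m A); split; rewrite // -!mulmxA mulKmx // mulmxV // mulmx1.
Qed.

Section PenroseEquations.
Local Unset Implicit Arguments.
Context {R : numClosedFieldType} {m n : nat}.
Context (A : 'M[R]_m) (B : 'M[R]_(m, n)) (C : 'M[R]_n).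
Hypotheses (Au : A \in unitmx) (Cu : C \in unitmx).
Local Notation M := (A *m B *m C).
Local Notation G := (C *m mp_inv M *m A).

Lemma mp_inv_conj_penrose1 : penrose 1 B G.
Proof.
rewrite /= -(mulmx_unit2_eq _ _ Au Cu).
have -> : A *m (B *m G *m B) *m C = M *m mp_inv M *m M by rewrite !mulmxA.
by rewrite mp_inv1.
Qed.

Lemma mp_inv_conj_penrose2 : penrose 2 B G.
Proof.
rewrite /=; have -> : G *m B *m G = C *m (mp_inv M *m M *m mp_inv M) *m A.
  by rewrite !mulmxA.
by rewrite mp_inv2.
Qed.

Lemma colspace_eq_gram_conj :
  colspace_eq (A *m ctr A *m M) M <-> colspace_eq (ctr A *m A *m B) B.
Proof.
have -> : A *m ctr A *m M = A *m (ctr A *m A *m B) *m C by rewrite !mulmxA.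
exact: colspace_eq_unit2.
Qed.

Lemma mp_inv_conj_penrose3 : penrose 3 B G <-> colspace_eq (ctr A *m A *m B) B.
Proof.
have BG : B *m G = invmx A *m (M *m mp_inv M) *m A.
  by rewrite !mulmxA mulVmx // mul1mx.
have AA'u : A *m ctr A \in unitmx by rewrite unitmx_mulctr.
rewrite /= BG (hermitian_unit_conjP Au (mp_inv3 M)) hermitian_commute_proj.
  rewrite -colspace_eq_rankP ?colspace_eq_gram_conj //.
  by rewrite eqmxMfull ?row_full_unit.
by rewrite ctrM ctrK.
Qed.

End PenroseEquations.

Section ReverseOrderLaw.
Local Unset Implicit Arguments.
Context {R : numClosedFieldType} {m n : nat}.
Context (A : 'M[R]_m) (B : 'M[R]_(m, n)) (C : 'M[R]_n).
Hypotheses (Au : A \in unitmx) (Cu : C \in unitmx).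
Local Notation M := (A *m B *m C).
Local Notation G := (C *m mp_inv M *m A).
Local Notation R1 := (colspace_eq (ctr A *m A *m B) B).
Local Notation R2 := (colspace_eq (C *m ctr C *m ctr B) (ctr B)).

Let ctr_M : ctr M = ctr C *m ctr B *m ctr A.
Proof. by rewrite !ctrM mulmxA. Qed.

Let A'u : ctr A \in unitmx. Proof. by rewrite ctr_unitmx. Qed.
Let C'u : ctr C \in unitmx. Proof. by rewrite ctr_unitmx. Qed.

Lemma mp_inv_conj_penrose4 : penrose 4 B G <-> R2.
Proof.
have G' : ctr A *m mp_inv (ctr M) *m ctr C = ctr G.
  by rewrite mp_inv_ctr !ctrM mulmxA.
have := mp_inv_conj_penrose3 (ctr C) (ctr B) (ctr A) C'u A'u.
rewrite -ctr_M G' /= -ctrM !ctrK => <-.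
by split=> /esym.
Qed.

Lemma in_CBA_mp_inv s :
  in_CBA s A B C (mp_inv M) <-> (3 \in s -> R1) /\ (4 \in s -> R2).
Proof.
rewrite in_CBA_iff // is_ginvE ?mp_inv_conj_penrose3 ?mp_inv_conj_penrose4 //.
  exact: mp_inv_conj_penrose1.
exact: mp_inv_conj_penrose2.
Qed.

Lemma reverse_order_lawP : mp_inv M = invmx C *m mp_inv B *m invmx A <-> R1 /\ R2.
Proof.
have M_G : mp_inv M = invmx C *m G *m invmx A.
  by rewrite -!mulmxA mulKmx // mulmxV // mulmx1.
rewrite {1}M_G mulmx_unit2_eq ?unitmx_inv //; split=> [GB | [r1 r2]].
  split; [apply/(mp_inv_conj_penrose3 A B C Au Cu) | apply/mp_inv_conj_penrose4].
    by rewrite /= GB mp_inv3.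
  by rewrite /= GB mp_inv4.
have BG12 := is_ginvE [:: 1; 2; 3; 4]%N (mp_inv_conj_penrose1 A B C Au Cu)
  (mp_inv_conj_penrose2 A B C).
apply/mp_inv_uniq/BG12.
by split=> _; [apply/(mp_inv_conj_penrose3 A B C Au Cu) | apply/mp_inv_conj_penrose4].
Qed.

Lemma colspace_eq_gram_mulP :
  colspace_eq (A *m ctr A *m M) M /\ colspace_eq (ctr C *m C *m ctr M) (ctr M)
  <-> R1 /\ R2.
Proof.
have := colspace_eq_gram_conj (ctr C) (ctr B) (ctr A) C'u A'u.
rewrite !ctrK -ctr_M => ->.
by rewrite colspace_eq_gram_conj.
Qed.

Lemma proj_gram_mulP :
  (ctr A *m A *m B) *m mp_inv (ctr A *m A *m B) = B *m mp_inv B /\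
    mp_inv (B *m C *m ctr C) *m (B *m C *m ctr C) = mp_inv B *m B
  <-> R1 /\ R2.
Proof.
rewrite mulmx_mp_inv_eq mp_inv_mulmx_eq.
by have -> : ctr (B *m C *m ctr C) = C *m ctr C *m ctr B by rewrite !ctrM ctrK mulmxA.
Qed.

Lemma EP_gram_factorsP :
  EP (ctr A *m A *m B *m ctr B) /\ EP (ctr B *m B *m C *m ctr C) <-> R1 /\ R2.
Proof.
rewrite EP_mul_gram ?unitmx_ctrmul // -[EP (_ *m ctr C)]EP_ctr !ctrM ctrK !mulmxA.
by rewrite EP_mul_gram ?unitmx_mulctr.
Qed.

Lemma EP_gram_productP :
  EP (A *m ctr A *m M *m ctr M) /\ EP (ctr M *m M *m ctr C *m C) <-> R1 /\ R2.
Proof.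
rewrite -colspace_eq_gram_mulP -[EP (_ *m C)]EP_ctr.
have -> : ctr (ctr M *m M *m ctr C *m C) = ctr C *m C *m ctr M *m ctr (ctr M).
  by rewrite !ctrM !ctrK !mulmxA.
by rewrite !EP_mul_gram ?unitmx_mulctr ?unitmx_ctrmul.
Qed.

End ReverseOrderLaw.

Theorem theorem4p2 (R : numClosedFieldType) (m n : nat)
  (A : 'M[R]_m) (B : 'M[R]_(m, n)) (C : 'M[R]_n) :
  (0 < m)%N -> (0 < n)%N -> A \in unitmx -> C \in unitmx ->
  let M := A *m B *m C in
  let R1 := colspace_eq (ctr A *m A *m B) B in
  let R2 := colspace_eq (C *m ctr C *m ctr B) (ctr B) in
  in_CBA [:: 1]%N A B C (mp_inv M) /\
      in_CBA [:: 1; 2]%N A B C (mp_inv M) /\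
      (in_CBA [:: 1; 3]%N A B C (mp_inv M) <-> R1) /\
      (in_CBA [:: 1; 4]%N A B C (mp_inv M) <-> R2) /\
      (in_CBA [:: 1; 2; 3]%N A B C (mp_inv M) <-> R1) /\
      (in_CBA [:: 1; 2; 4]%N A B C (mp_inv M) <-> R2) /\
      (in_CBA [:: 1; 3; 4]%N A B C (mp_inv M) <-> R1 /\ R2) /\
    [<-> mp_inv M = invmx C *m mp_inv B *m invmx A;
           R1 /\ R2;
           colspace_eq (A *m ctr A *m M) M /\ colspace_eq (ctr C *m C *m ctr M) (ctr M);
           (ctr A *m A *m B) *m mp_inv (ctr A *m A *m B) = B *m mp_inv B /\
             mp_inv (B *m C *m ctr C) *m (B *m C *m ctr C) = mp_inv B *m B;
           EP (ctr A *m A *m B *m ctr B) /\ EP (ctr B *m B *m C *m ctr C);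
           EP (A *m ctr A *m M *m ctr M) /\ EP (ctr M *m M *m ctr C *m C)].
Proof.
move=> _ _ Au Cu M R1 R2.
have key s := in_CBA_mp_inv A B C Au Cu s.
do 7 (split; first by rewrite key /R1 /R2; intuition).
move: (reverse_order_lawP A B C Au Cu) (colspace_eq_gram_mulP A B C Au Cu)
  (proj_gram_mulP A B C) (EP_gram_factorsP A B C Au Cu)
  (EP_gram_productP A B C Au Cu) => i iii iv v vi.
tfae.
- by move/i.
- by move/iii.
- by move/iii/iv.
- by move/iv/v.
- by move/v/vi.
- by move/vi/i.
Qed.
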